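(* Let $x^0, x^1, x^2, \ldots \in \mathbb{R}^m$ be a sequence of vectors and suppose there is a constant $B>0$ with $\|x^n\|_2^2 \le B$ for every $n$. For each $n\ge 1$ let $X^{n-1}\in\mathbb{R}^{n\times m}$ be the matrix whose rows are $(x^0)^T,\ldots,(x^{n-1})^T$. Suppose that for some (large enough) $N'$ the matrix $X^{N'-1}$ satisfies the sparse Riesz condition $\mathrm{SRC}(r,c_*,c^* )$. Let $c>1$ be a constant. Then for every integer $n'$ with $N'<n'\le cN'$, the matrix $X^{n'-1}$ satisfies $\mathrm{SRC}(r, c_*/c, \max(c^*,B))$.
   Context: The coordinate index set $\{1,\ldots,m\}$ is partitioned into nonoverlapping groups $\mathcal{G}_1,\ldots,\mathcal{G}_p$ with $d_j=|\mathcal{G}_j|$. For a set $\mathcal{S}\subset\{1,\ldots,p\}$ of group indices, $X_{*\mathcal{S}}$ denotes the submatrix of $X$ formed by the columns indexed by $\bigcup_{j\in\mathcal{S}}\mathcal{G}_j$. A matrix $X^{n-1}$ with $n$ rows satisfies the sparse Riesz condition $\mathrm{SRC}(r,c_*,c^* )$, where $0<c_*<c^*<\infty$, if for every $\mathcal{S}\subset\{1,\ldots,p\}$ with $|\mathcal{S}|=r$ and every $\nu\in\mathbb{R}^{\sum_{j\in\mathcal{S}}d_j}$, $c_*\|\nu\|_2^2\le \|X^{n-1}_{*\mathcal{S}}\nu\|_2^2/n\le c^*\|\nu\|_2^2$. *)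

From HB Require Import structures.
From mathcomp Require Import all_boot all_order all_algebra.
Set Implicit Arguments. Unset Strict Implicit. Unset Printing Implicit Defensive.
Import Order.TTheory GRing.Theory Num.Theory.
Local Open Scope ring_scope.

(* Coordinates are 'I_m (0-based), groups are 'I_p; the group partition
   G_1..G_p is encoded by the map g sending a coordinate to its group. *)

Definition sqnorm (R : realFieldType) (k : nat) (v : 'rV[R]_k) : R :=
  \sum_(j < k) v 0 j ^+ 2.

Definition grp_cols (m p : nat) (g : 'I_m -> 'I_p) (S : {set 'I_p}) : {set 'I_m} :=
  [set i | g i \in S].

Definition subcols (R : realFieldType) (n m p : nat) (g : 'I_m -> 'I_p)
  (X : 'M[R]_(n, m)) (S : {set 'I_p}) : 'M[R]_(n, #|grp_cols g S|) :=
  colsub (fun k : 'I_#|grp_cols g S| => enum_val k) X.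

Definition SRC (R : realFieldType) (n m p : nat) (g : 'I_m -> 'I_p)
  (X : 'M[R]_(n, m)) (r : nat) (cl cu : R) : Prop :=
  0 < cl /\ cl < cu /\
  forall S : {set 'I_p}, #|S| = r ->
  forall nu : 'cV[R]_#|grp_cols g S|,
    cl * sqnorm nu^T <= sqnorm (subcols g X S *m nu)^T / n%:R
    /\ sqnorm (subcols g X S *m nu)^T / n%:R <= cu * sqnorm nu^T.

(* X^{n-1}: the n x m matrix whose rows are x^0, ..., x^{n-1} *)
Definition Xmat (R : realFieldType) (m : nat) (x : nat -> 'rV[R]_m) (n : nat)
  : 'M[R]_(n, m) := \matrix_(i < n, j < m) x i 0 j.

(* Row i of X^{n-1}_{*S} nu is a linear form in x^i, so the energy
   ||X^{n-1}_{*S} nu||^2 is a sum over the rows, each term bounded by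
   B ||nu||^2 by Cauchy-Schwarz.  Passing from N' to n' rows only adds
   nonnegative terms: the energy stays above c_* N' ||nu||^2 >= (c_*/c) n' ||nu||^2,
   and it grows by at most B ||nu||^2 per new row, so it stays below
   max(c^*, B) n' ||nu||^2. *)
From HB Require Import structures.
From mathcomp Require Import all_boot all_order all_algebra.
From mathcomp Require Import ring lra.
Set Implicit Arguments. Unset Strict Implicit. Unset Printing Implicit Defensive.
Import Order.TTheory GRing.Theory Num.Theory.
Local Open Scope ring_scope.

Lemma sqnorm_ge0 {R : realFieldType} {k : nat} (v : 'rV[R]_k) : 0 <= sqnorm v.
Proof. by apply: sumr_ge0 => j _; exact: sqr_ge0. Qed.

(* Lagrange's identity: the right side minus the left is half of
   \sum_(i, j) (a i b j - a j b i)^2. *)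
Lemma sum_mul_sqr_le {R : realFieldType} {k : nat} (a b : 'I_k -> R) :
  (\sum_i a i * b i) ^+ 2 <= (\sum_i a i ^+ 2) * (\sum_i b i ^+ 2).
Proof.
have lagrange_ge0 : 0 <= \sum_i \sum_j (a i * b j - a j * b i) ^+ 2.
  by apply: sumr_ge0 => i _; apply: sumr_ge0 => j _; exact: sqr_ge0.
have expand i : \sum_j (a i * b j - a j * b i) ^+ 2 =
    \sum_j a i ^+ 2 * b j ^+ 2 + \sum_j a j ^+ 2 * b i ^+ 2
    - 2 * \sum_j (a i * b i) * (a j * b j).
  rewrite mulr_sumr -big_split -sumrB /=.
  by apply: eq_bigr => j _; ring.
have prod_sum (u v : 'I_k -> R) :
    \sum_i \sum_j u i * v j = (\sum_i u i) * (\sum_j v j).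
  by rewrite mulr_suml; apply: eq_bigr => i _; rewrite mulr_sumr.
rewrite (eq_bigr _ (fun i _ => expand i)) sumrB big_split -mulr_sumr /= in lagrange_ge0.
rewrite prod_sum exchange_big prod_sum /= prod_sum -expr2 in lagrange_ge0.
lra.
Qed.

Lemma sqnorm_colsub_le {R : realFieldType} {k l : nat} (f : 'I_l -> 'I_k)
    (v : 'rV[R]_k) :
  injective f -> sqnorm (colsub f v) <= sqnorm v.
Proof.
move=> f_inj; rewrite /sqnorm.
under eq_bigr do rewrite mxE.
rewrite -(big_imset (fun i => v 0 i ^+ 2) (in2W (D1 := predT) f_inj)) /=.
rewrite [leRHS](bigID (mem [set f j | j in predT])) /= lerDl.
by apply: sumr_ge0 => j _; exact: sqr_ge0.
Qed.

Lemma sqr_mulmx_le {R : realFieldType} {k : nat} (u : 'rV[R]_k) (nu : 'cV[R]_k) :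
  (u *m nu) 0 0 ^+ 2 <= sqnorm u * sqnorm nu^T.
Proof.
rewrite mxE /sqnorm; under [X in _ * X]eq_bigr do rewrite mxE.
exact: sum_mul_sqr_le.
Qed.

Section Energy.

Variables (R : realFieldType) (m p : nat) (g : 'I_m -> 'I_p).
Variables (x : nat -> 'rV[R]_m) (S : {set 'I_p}) (nu : 'cV[R]_#|grp_cols g S|).

Definition row_energy (i : nat) : R :=
  (colsub enum_val (x i) *m nu) 0 0 ^+ 2.

Definition energy (n : nat) : R := sqnorm (subcols g (Xmat x n) S *m nu)^T.

Lemma energyE n : energy n = \sum_(0 <= i < n) row_energy i.
Proof.
rewrite big_mkord /energy /sqnorm; apply: eq_bigr => i _.
by rewrite !mxE /row_energy mxE; congr (_ ^+ 2); apply: eq_bigr => k _; rewrite !mxE.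
Qed.

Lemma row_energy_le B : (forall i, sqnorm (x i) <= B) ->
  forall i, row_energy i <= B * sqnorm nu^T.
Proof.
move=> xB i; apply: le_trans (sqr_mulmx_le _ _) _.
apply: ler_wpM2r; first exact: sqnorm_ge0.
exact: le_trans (sqnorm_colsub_le _ enum_val_inj) (xB i).
Qed.

Lemma energy_split {N n : nat} : (N <= n)%N ->
  energy n = energy N + \sum_(N <= i < n) row_energy i.
Proof. by move=> leNn; rewrite !energyE (big_cat_nat (leq0n N) leNn). Qed.

Lemma energy_mono {N n : nat} : (N <= n)%N -> energy N <= energy n.
Proof.
move=> leNn; rewrite (energy_split leNn) lerDl.
by apply: sumr_ge0 => i _; exact: sqr_ge0.
Qed.

Lemma energy_le_add {B : R} {N n : nat} :
  (forall i, sqnorm (x i) <= B) -> (N <= n)%N ->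
  energy n <= energy N + B * sqnorm nu^T * (n - N)%:R.
Proof.
move=> xB leNn; rewrite (energy_split leNn) lerD2l mulr_natr -sumr_const_nat.
by apply: ler_sum => i _; exact: row_energy_le.
Qed.

Lemma energy_lower_bound (cl c : R) {N n : nat} :
  0 <= cl -> 0 < c -> (0 < N)%N -> (N <= n)%N -> n%:R <= c * N%:R ->
  cl * sqnorm nu^T <= energy N / N%:R ->
  cl / c * sqnorm nu^T <= energy n / n%:R.
Proof.
move=> cl_ge0 c_gt0 N_gt0 leNn lenc; set t := sqnorm nu^T.
have n_gt0 : (0 < n)%N := leq_trans N_gt0 leNn.
rewrite !ler_pdivlMr ?ltr0n // => lo.
have shrink : cl / c * t * n%:R <= cl * t * N%:R.
  rewrite (_ : cl / c * t * n%:R = cl * t * (n%:R / c)); last by ring.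
  apply: ler_wpM2l; first exact: mulr_ge0 (sqnorm_ge0 _).
  by rewrite ler_pdivrMr // mulrC.
exact: le_trans shrink (le_trans lo (energy_mono leNn)).
Qed.

Lemma energy_upper_bound (cu B : R) {N n : nat} :
  (forall i, sqnorm (x i) <= B) -> (0 < N)%N -> (N <= n)%N ->
  energy N / N%:R <= cu * sqnorm nu^T ->
  energy n / n%:R <= Num.max cu B * sqnorm nu^T.
Proof.
move=> xB N_gt0 leNn; set t := sqnorm nu^T; set M := Num.max cu B.
have n_gt0 : (0 < n)%N := leq_trans N_gt0 leNn.
have t_ge0 : 0 <= t := sqnorm_ge0 _.
rewrite !ler_pdivrMr ?ltr0n // => hi.
have old : energy N <= M * t * N%:R.
  by apply: le_trans hi _; rewrite ler_wpM2r // ler_wpM2r // le_max lexx.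
have new : B * t * (n - N)%:R <= M * t * (n - N)%:R.
  by rewrite ler_wpM2r // ler_wpM2r // le_max lexx orbT.
apply: le_trans (energy_le_add xB leNn) _.
rewrite -[in leRHS](subnKC leNn) natrD mulrDr.
exact: lerD.
Qed.

End Energy.

Theorem proposition2 (R : realFieldType) (m p : nat) (g : 'I_m -> 'I_p)
  (Hg : forall j : 'I_p, exists i : 'I_m, g i = j)
  (x : nat -> 'rV[R]_m) (B : R) (HB : 0 < B)
  (Hx : forall n : nat, sqnorm (x n) <= B)
  (N' r : nat) (cl cu : R) (HN' : (1 <= N')%N)
  (Hsrc : SRC g (Xmat x N') r cl cu)
  (c : R) (Hc : 1 < c) :
  forall n' : nat, (N' < n')%N -> n'%:R <= c * N'%:R ->
    SRC g (Xmat x n') r (cl / c) (Num.max cu B).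
Proof.
move=> n' ltNn lenc; have leNn := ltnW ltNn.
have [cl_gt0 [cl_lt_cu src]] := Hsrc.
have c_gt0 : 0 < c by lra.
split; first exact: divr_gt0.
split.
  have clc_lt_cl : cl / c < cl by rewrite ltr_pdivrMr // ltr_pMr.
  by apply: (lt_le_trans clc_lt_cl); rewrite le_max (ltW cl_lt_cu).
move=> S cardS nu; have [lo hi] := src S cardS nu.
(* Folding [energy] keeps the final [exact:] steps from unfolding the matrices. *)
rewrite -/(energy x nu n'); rewrite -/(energy x nu N') in lo hi.
split.
- exact: energy_lower_bound (ltW cl_gt0) c_gt0 HN' leNn lenc lo.
- exact: energy_upper_bound Hx HN' leNn hi.
Qed.
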